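(* For all sufficiently large $n$ the following holds for every $1\le k\le n$. Fix a recipient coordinate $i\in[n]$ and vectors $(z_j)_{j\ne i}$ in $V=\mathbb F_2^k$. If the $i$-fibre $\{(z_1,\dots,z_{i-1},u,z_{i+1},\dots,z_n):u\in V\}$ intersects $\mathcal G_{\mathrm{tr}}$, then the kernel $K_i$ on $V$ defined by $K_i\varphi(u)=\frac1{n-1}\sum_{j\ne i}\varphi(u+z_j)$ has spectral gap at least $1/2$ with respect to the uniform measure on $V$.
   Context: $V=\mathbb F_2^k$, $\mathrm{St}(n,k)=\{(z_1,\dots,z_n)\in V^n:\operatorname{span}(z_1,\dots,z_n)=V\}$. For $\xi$ in the dual $V^*$, $\chi_\xi(u)=(-1)^{\xi(u)}$ and $S_\xi(z)=\sum_{i=1}^n\chi_\xi(z_i)$. The good set is $\mathcal G_{\mathrm{tr}}=\{z\in\mathrm{St}(n,k):\max_{0\ne\xi\in V^*}|S_\xi(z)|\le n/4\}$. The spectral gap of a reversible kernel $K$ with stationary law $\rho$ is the largest $\gamma$ with $\gamma\operatorname{Var}_\rho(f)\le\frac12\sum_{x,y}\rho(x)K(x,y)(f(x)-f(y))^2$ for all real $f$. *)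

From HB Require Import structures.
From mathcomp Require Import all_boot all_order all_algebra.
From mathcomp Require Import classical_sets reals.
Set Implicit Arguments. Unset Strict Implicit. Unset Printing Implicit Defensive.
Import Order.TTheory GRing.Theory Num.Theory.
Local Open Scope ring_scope.

Notation Vk k := 'rV['F_2]_k.

(* Elements of the dual V^* are represented by column vectors xi,
   acting by xi(u) = u *m xi (the standard identification V^* = F_2^k). *)
Definition dual_app (k : nat) (xi : 'cV['F_2]_k) (u : Vk k) : 'F_2 := (u *m xi) 0 0.

(* St(n,k): the tuples (z_1,...,z_n) spanning V, i.e. the n x k matrix with
   rows z_j has full row space. *)
Definition in_St (n k : nat) (z : 'I_n -> Vk k) : bool :=
  row_full (\matrix_(j < n) z j).

Definition chi (R : realType) (k : nat) (xi : 'cV['F_2]_k) (u : Vk k) : R :=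
  if dual_app xi u == 0 then 1 else -1.

Definition S_sum (R : realType) (n k : nat) (xi : 'cV['F_2]_k) (z : 'I_n -> Vk k) : R :=
  \sum_(j < n) chi R xi (z j).

Definition in_Gtr (R : realType) (n k : nat) (z : 'I_n -> Vk k) : Prop :=
  in_St z /\ forall xi : 'cV['F_2]_k, xi != 0 -> `|S_sum R xi z| <= n%:R / 4.

Definition fibre_pt (n k : nat) (z : 'I_n -> Vk k) (i : 'I_n) (u : Vk k) : 'I_n -> Vk k :=
  fun j => if j == i then u else z j.

(* Kernel K_i on V: K_i phi(u) = 1/(n-1) sum_{j<>i} phi(u + z_j), i.e.
   K_i(u,v) = 1/(n-1) #{ j <> i : v = u + z_j }. *)
Definition Ki (R : realType) (n k : nat) (i : 'I_n) (z : 'I_n -> Vk k) (u v : Vk k) : R :=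
  (n.-1)%:R^-1 * \sum_(j < n | j != i) (if v == u + z j then 1 else 0).

Definition variance (R : realType) (T : finType) (rho : T -> R) (f : T -> R) : R :=
  \sum_x rho x * f x ^+ 2 - (\sum_x rho x * f x) ^+ 2.

Definition dirichlet (R : realType) (T : finType) (rho : T -> R) (K : T -> T -> R)
  (f : T -> R) : R :=
  2^-1 * \sum_x \sum_y rho x * K x y * (f x - f y) ^+ 2.

Definition spectral_gap (R : realType) (T : finType) (rho : T -> R) (K : T -> T -> R) : R :=
  sup [set g : R | forall f : T -> R, g * variance rho f <= dirichlet rho K f].

Definition uniform (R : realType) (T : finType) : T -> R := fun _ => (#|T|%:R)^-1.

From HB Require Import structures.
From mathcomp Require Import all_boot all_order all_algebra.
From mathcomp Require Import classical_sets reals.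
From mathcomp Require Import ring lra.
Import Order.TTheory GRing.Theory Num.Theory.
Set Implicit Arguments. Unset Strict Implicit.
Local Open Scope ring_scope.

(* The characters chi_xi of V = F_2^k diagonalise the random walk K_i: the
   eigenvalue at chi_xi is lambda(xi) = (n-1)^-1 sum_(j <> i) chi_xi(z_j), and
   Parseval's identity writes the variance and the Dirichlet form of f as
   sums of the squared Fourier coefficients of f over xi <> 0, weighted by 1
   and by 1 - lambda(xi) respectively.  Hence the spectral gap is at least
   1 - max_(xi <> 0) lambda(xi).  If the fibre point (..., u, ...) is good,
   then sum_(j <> i) chi_xi(z_j) = S_xi - chi_xi(u) <= n/4 + 1 <= (n-1)/2 for
   n >= 6, so every nontrivial eigenvalue is at most 1/2. *)

Lemma le_spectral_gap (R : realType) (T : finType) (rho : T -> R)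
    (K : T -> T -> R) (g : R) (f0 : T -> R) :
  0 < variance rho f0 ->
  (forall f, g * variance rho f <= dirichlet rho K f) -> g <= spectral_gap rho K.
Proof.
move=> var_gt0 gap_g; apply: sup_upper_bound => //; split; first by exists g.
by exists (dirichlet rho K f0 / variance rho f0) => h gap_h; rewrite ler_pdivlMr.
Qed.

Lemma variance_uniform_indicator_gt0 (R : realType) (T : finType) (t : T) :
  (1 < #|T|)%N -> 0 < variance (@uniform R T) (fun x => (x == t)%:R).
Proof.
move=> T_gt1; set p : R := #|T|%:R^-1.
have p_gt0 : 0 < p by rewrite invr_gt0 ltr0n ltnW.
have p_lt1 : p < 1 by rewrite invf_lt1 ?ltr1n // ltr0n ltnW.
have sum_indicator (F : T -> R) : \sum_x F x * (x == t)%:R = F t.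
  by rewrite (bigD1 t) //= eqxx mulr1 big1 ?addr0 // => x /negbTE ->; rewrite mulr0.
have indicator_sqr x : (x == t)%:R ^+ 2 = (x == t)%:R :> R.
  by case: (x == t); rewrite ?expr1n ?expr0n.
rewrite /variance /uniform -/p.
under eq_bigr => x _ do rewrite indicator_sqr.
rewrite !sum_indicator subr_gt0 expr2 -[X in _ < X]mulr1.
by rewrite ltr_pM2l.
Qed.

Lemma F2_cases (a : 'F_2) : a = 0 \/ a = 1.
Proof. by case: a => [[|[|m]] //= ?]; [left | right]; apply/val_inj. Qed.

Lemma addvv (k : nat) (v : Vk k) : v + v = 0.
Proof. by apply/matrixP => a b; rewrite !mxE addrr_pchar2 //; apply: pchar_Fp. Qed.

Lemma oppv (k : nat) (v : Vk k) : - v = v.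
Proof. by apply/eqP; rewrite eq_sym -subr_eq0 opprK addvv. Qed.

Section Characters.

Variables (R : realType) (k : nat).
Local Notation V := (Vk k).
Local Notation dual := 'cV['F_2]_k.
Local Notation N := (#|{: V}|%:R : R).

Lemma card_dual : #|{: dual}| = #|{: V}|.
Proof. by rewrite !card_mx mul1n muln1. Qed.

Lemma card_V_gt0 : 0 < N.
Proof. by rewrite ltr0n card_mx card_Fp // expn_gt0. Qed.

Lemma sign_F2D (a b : 'F_2) :
  (if a + b == 0 then 1 else -1 : R)
  = (if a == 0 then 1 else -1) * (if b == 0 then 1 else -1).
Proof.
by case: (F2_cases a) => ->; case: (F2_cases b) => -> /=; rewrite ?mulrNN ?mulr1 ?mul1r.
Qed.

Lemma chiD (xi : dual) (u v : V) : chi R xi (u + v) = chi R xi u * chi R xi v.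
Proof. by rewrite /chi /dual_app mulmxDl mxE sign_F2D. Qed.

Lemma chiDdual (xi xi' : dual) (u : V) :
  chi R (xi + xi') u = chi R xi u * chi R xi' u.
Proof. by rewrite /chi /dual_app mulmxDr mxE sign_F2D. Qed.

Lemma chi0 (u : V) : chi R 0 u = 1.
Proof. by rewrite /chi /dual_app mulmx0 mxE eqxx. Qed.

Lemma chix0 (xi : dual) : chi R xi 0 = 1.
Proof. by rewrite /chi /dual_app mul0mx mxE eqxx. Qed.

Lemma chi_ge_N1 (xi : dual) (u : V) : -1 <= chi R xi u.
Proof. by rewrite /chi; case: ifP => _; lra. Qed.

Lemma sum_chi (w : V) : \sum_(xi : dual) chi R xi w = if w == 0 then N else 0.
Proof.
have [->|w_neq0] := eqVneq w 0.
  by rewrite (eq_bigr (fun=> 1)) ?sumr_const ?card_dual // => xi _; rewrite chix0.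
have [j wj_neq0] : exists j, w 0 j != 0.
  apply/existsP; apply: contraR w_neq0 => /existsPn w0.
  by apply/eqP/matrixP => a b; rewrite ord1 mxE; apply/eqP/negPn.
have chi_delta : chi R (delta_mx j 0) w = -1.
  by rewrite /chi /dual_app -colE mxE; case: (F2_cases (w 0 j)) wj_neq0 => ->.
(* Translating xi by delta_j multiplies every term by chi_(delta_j)(w) = -1. *)
have sum_opp : \sum_(xi : dual) chi R xi w = - \sum_(xi : dual) chi R xi w.
  rewrite {1}(reindex_inj (addIr (delta_mx j 0))) /= -mulN1r mulr_sumr.
  by apply: eq_bigr => xi _; rewrite chiDdual chi_delta mulrN1 mulN1r.
lra.
Qed.

Definition fourier (f : V -> R) (xi : dual) : R := \sum_x f x * chi R xi x.

Lemma fourier0 (f : V -> R) : fourier f 0 = \sum_x f x.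
Proof. by apply: eq_bigr => x _; rewrite chi0 mulr1. Qed.

Lemma sum_chi_fourier_sqr (f : V -> R) (a : V) :
  \sum_xi chi R xi a * fourier f xi ^+ 2 = N * \sum_x f x * f (x + a).
Proof.
under eq_bigr => xi _.
  have -> : chi R xi a * fourier f xi ^+ 2
            = \sum_x \sum_y f x * f y * chi R xi (a + x + y).
    rewrite /fourier expr2 mulrA [chi R xi a * _]mulr_sumr mulr_suml; apply: eq_bigr => x _.
    by rewrite mulr_sumr; apply: eq_bigr => y _; rewrite !chiD; ring.
  over.
rewrite exchange_big mulr_sumr; apply: eq_bigr => x _.
rewrite exchange_big /=.
under eq_bigr => y _ do rewrite -mulr_sumr sum_chi [a + x]addrC addr_eq0 oppv eq_sym.
rewrite (bigD1 (x + a)) //= big1 => [|y /negbTE -> ]; last by rewrite mulr0.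
by rewrite eqxx addr0; ring.
Qed.

Lemma sum_fourier_sqr (f : V -> R) : \sum_xi fourier f xi ^+ 2 = N * \sum_x f x ^+ 2.
Proof.
transitivity (\sum_xi chi R xi 0 * fourier f xi ^+ 2).
  by apply: eq_bigr => xi _; rewrite chix0 mul1r.
by rewrite sum_chi_fourier_sqr; under eq_bigr => x _ do rewrite addr0 -expr2.
Qed.

Lemma sum_sqr_diff_shift (f : V -> R) (a : V) :
  \sum_x (f x - f (x + a)) ^+ 2
  = 2 * N^-1 * \sum_xi (1 - chi R xi a) * fourier f xi ^+ 2.
Proof.
have shift : \sum_x f (x + a) ^+ 2 = \sum_x f x ^+ 2.
  by rewrite [RHS](reindex_inj (addIr a)).
rewrite [in RHS](eq_bigr (fun xi => fourier f xi ^+ 2 - chi R xi a * fourier f xi ^+ 2));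
  last by move=> xi _; rewrite mulrBl mul1r.
rewrite sumrB sum_fourier_sqr sum_chi_fourier_sqr -mulrBr mulrA mulfVK; last first.
  exact: lt0r_neq0 card_V_gt0.
rewrite (eq_bigr (fun x => f x ^+ 2 + f (x + a) ^+ 2 - 2 * (f x * f (x + a))));
  last by move=> x _; ring.
by rewrite sumrB big_split /= shift -mulr_sumr; ring.
Qed.

Lemma variance_uniform_fourier (f : V -> R) :
  variance (@uniform R V) f = N ^- 2 * \sum_(xi | xi != 0) fourier f xi ^+ 2.
Proof.
have := sum_fourier_sqr f; rewrite (bigD1 0) //= fourier0 => plancherel.
have -> : \sum_(xi | xi != 0) fourier f xi ^+ 2
          = N * \sum_x f x ^+ 2 - (\sum_x f x) ^+ 2 by lra.
rewrite /variance /uniform -!mulr_sumr; field.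
exact: lt0r_neq0 card_V_gt0.
Qed.

End Characters.

Section RandomWalk.

Variables (R : realType) (n k : nat) (i : 'I_n) (z : 'I_n -> Vk k).
Local Notation V := (Vk k).
Local Notation N := (#|{: V}|%:R : R).
Local Notation d := ((n.-1)%:R : R).

Definition Ki_eigenvalue (xi : 'cV['F_2]_k) : R :=
  d^-1 * \sum_(j < n | j != i) chi R xi (z j).

Lemma sum_neq_const (a : R) : \sum_(j < n | j != i) a = d * a.
Proof. by rewrite sumr_const cardC1 card_ord mulr_natl. Qed.

Lemma sum_Ki (x : V) (h : V -> R) :
  \sum_y Ki R i z x y * h y = d^-1 * \sum_(j < n | j != i) h (x + z j).
Proof.
rewrite /Ki; under eq_bigr => y _ do rewrite -mulrA mulr_suml.
rewrite -mulr_sumr exchange_big /=; congr (_ * _); apply: eq_bigr => j _.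
by rewrite (bigD1 (x + z j)) //= eqxx mul1r big1 ?addr0 // => y /negbTE ->; rewrite mul0r.
Qed.

Lemma S_sum_fibre_pt (u : V) (xi : 'cV['F_2]_k) :
  S_sum R xi (fibre_pt z i u) = chi R xi u + \sum_(j < n | j != i) chi R xi (z j).
Proof.
rewrite /S_sum (bigD1 i) //= /fibre_pt eqxx; congr (_ + _).
by apply: eq_bigr => j /negbTE ->.
Qed.

Lemma Ki_eigenvalue_le_half (u : V) : (6 <= n)%N ->
  (forall xi, xi != 0 -> `|S_sum R xi (fibre_pt z i u)| <= n%:R / 4) ->
  forall xi, xi != 0 -> Ki_eigenvalue xi <= 2^-1.
Proof.
move=> n_ge6 good xi xi_neq0.
have n_gt0 : (0 < n)%N by apply: leq_trans n_ge6.
have := le_trans (ler_norm _) (good xi xi_neq0).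
have -> : n%:R = d + 1 :> R by rewrite natr1 prednK.
rewrite S_sum_fibre_pt => S_le.
have := chi_ge_N1 R xi u.
have d_ge5 : 5 <= d by rewrite (ler_nat R 5) -ltnS prednK.
rewrite /Ki_eigenvalue mulrC ler_pdivrMr; lra.
Qed.

Hypothesis n_gt1 : (1 < n)%N.

Lemma d_gt0 : 0 < d.
Proof. by rewrite ltr0n -ltnS prednK // ltnW. Qed.

Lemma sum_neq_one_sub_chi (xi : 'cV['F_2]_k) :
  \sum_(j < n | j != i) (1 - chi R xi (z j)) = d * (1 - Ki_eigenvalue xi).
Proof.
rewrite sumrB sum_neq_const /Ki_eigenvalue mulrBr mulr1 mulrA mulfV ?mul1r //.
exact: lt0r_neq0 d_gt0.
Qed.

Lemma dirichlet_Ki_fourier (f : V -> R) :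
  dirichlet (@uniform R V) (Ki R i z) f
  = N ^- 2 * \sum_xi (1 - Ki_eigenvalue xi) * fourier f xi ^+ 2.
Proof.
rewrite /dirichlet /uniform.
under eq_bigr => x _.
  under eq_bigr => y _ do rewrite -mulrA.
  rewrite -mulr_sumr sum_Ki.
  over.
rewrite -!mulr_sumr exchange_big /=.
under eq_bigr => j _ do rewrite sum_sqr_diff_shift.
rewrite -mulr_sumr exchange_big /=.
under eq_bigr => xi _ do rewrite -mulr_suml sum_neq_one_sub_chi -mulrA.
rewrite -mulr_sumr; field.
by rewrite !lt0r_neq0 ?d_gt0 ?card_V_gt0.
Qed.

Lemma variance_le_dirichlet_Ki (g : R) :
  (forall xi, xi != 0 -> Ki_eigenvalue xi <= 1 - g) ->
  forall f : V -> R, g * variance (@uniform R V) f <= dirichlet (@uniform R V) (Ki R i z) f.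
Proof.
move=> eigen_le f.
rewrite variance_uniform_fourier dirichlet_Ki_fourier [in X in _ <= X](bigD1 0) //=.
have -> : Ki_eigenvalue 0 = 1.
  by rewrite /Ki_eigenvalue; under eq_bigr => j _ do rewrite chi0;
     rewrite sum_neq_const mulr1 mulVf // lt0r_neq0 ?d_gt0.
rewrite subrr mul0r add0r mulrCA.
apply: ler_wpM2l; first by rewrite invr_ge0 exprn_ge0 // ltW // card_V_gt0.
rewrite mulr_sumr; apply: ler_sum => xi xi_neq0.
by apply: ler_wpM2r; [exact: sqr_ge0 | have := eigen_le _ xi_neq0; lra].
Qed.

End RandomWalk.

Theorem proposition3p4 :
  exists N : nat, forall (R : realType) (n : nat), (N <= n)%N ->
  forall k : nat, (1 <= k <= n)%N ->
  forall (i : 'I_n) (z : 'I_n -> 'rV['F_2]_k),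
    (exists u : 'rV['F_2]_k, in_Gtr R (fibre_pt z i u)) ->
    2^-1 <= spectral_gap (@uniform R _ : 'rV['F_2]_k -> R) (Ki R i z).
Proof.
exists 6%N => R n n_ge6 k /andP[k_gt0 _] i z [u [_ good]].
apply: (@le_spectral_gap _ _ _ _ _ (fun x => (x == 0)%:R)).
  apply: variance_uniform_indicator_gt0.
  by rewrite card_mx card_Fp // mul1n -{1}(expn0 2) ltn_exp2l.
apply: variance_le_dirichlet_Ki; first exact: leq_trans n_ge6.
by move=> xi /(Ki_eigenvalue_le_half n_ge6 good); lra.
Qed.
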